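(* In the category $\mathbf{Tree}$, the classes of boundary-preserving morphisms and of free morphisms form an orthogonal factorisation system. In particular every morphism $\phi:\overline{\mathsf S}\to\overline{\mathsf T}$ factors, uniquely up to unique isomorphism, as a boundary-preserving morphism followed by a free morphism.
   Context: A polynomial endofunctor is a diagram of sets $P_0\xleftarrow{s}P_2\xrightarrow{p}P_1\xrightarrow{t}P_0$ with $p$ having finite fibres; a morphism is a triple of maps commuting with $s,p,t$ whose middle square is a pullback. A tree is a polynomial endofunctor with all sets finite, $t$ injective, $s$ injective with singleton complement (the root), and such that iterating $\sigma$ ($\sigma(\mathrm{root})=\mathrm{root}$, $\sigma(e)=t(p(e))$ for $e\in T_2$) brings every edge to the root. $\mathbf{TEmb}$ is the category of trees and such morphisms. For a tree $\mathsf T$, $\overline{\mathsf T}$ is the free polynomial monad $T_0\leftarrow\mathrm{sub}'(\mathsf T)\to\mathrm{sub}(\mathsf T)\to T_0$ ($\mathrm{sub}$ = subtrees, $\mathrm{sub}'$ = subtrees with marked leaf; maps: marked leaf, forget mark, root; multiplication by grafting). $\mathbf{Tree}$ has trees as objects and monad morphisms $\overline{\mathsf S}\to\overline{\mathsf T}$ as morphisms. A morphism $\phi:\overline{\mathsf S}\to\overline{\mathsf T}$ is boundary preserving if $\phi_1:\mathrm{sub}(\mathsf S)\to\mathrm{sub}(\mathsf T)$ sends the maximal subtree $\mathsf S$ to the maximal subtree $\mathsf T$. It is free if $\phi=\overline\alpha$ for some morphism $\alpha:\mathsf S\to\mathsf T$ in $\mathbf{TEmb}$ (where $\overline\alpha$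 sends a subtree to its image). *)

From mathcomp Require Import all_boot.
Set Implicit Arguments. Unset Strict Implicit. Unset Printing Implicit Defensive.

(* A polynomial endofunctor with finite sets  P0 <-s- P2 -p-> P1 -t-> P0
   (finite fibres of p are automatic). *)
Record poly := Poly {
  P0 : finType; P1 : finType; P2 : finType;
  ps : P2 -> P0; pp : P2 -> P1; pt : P1 -> P0 }.

Definition sigma_in (P : poly) (F : {set P2 P}) (r : P0 P) (e : P0 P) : P0 P :=
  if [pick f in F | ps f == e] is Some f then pt (pp f) else r.

(* The sub-diagram E <- F -> N -> E of P, with F := p^{-1}(N) (so that the
   inclusion has a pullback middle square), is closed under s,p,t and is a tree
   with root r. *)
Definition is_subtree_data (P : poly) (E : {set P0 P}) (N : {set P1 P}) (r : P0 P)
  : Prop :=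
  let F := [set f | pp f \in N] in
  [/\ (forall n, n \in N -> pt n \in E) /\ (forall f, f \in F -> ps f \in E),
      {in N &, injective (@pt P)} /\ {in F &, injective (@ps P)},
      r \in E,
      (forall e, e \in E -> (e \notin (@ps P) @: F) = (e == r))
    & (forall e, e \in E -> exists k, iter k (sigma_in F r) e = r)].

Definition is_tree (P : poly) : Prop := exists r, @is_subtree_data P setT setT r.

Record tree := Tree { tpoly :> poly; tree_ax : is_tree tpoly }.

(* Morphisms in TEmb (pullback middle square). *)
Definition temb (S T : tree) (a0 : P0 S -> P0 T) (a1 : P1 S -> P1 T)
  (a2 : P2 S -> P2 T) : Prop :=
  [/\ forall f, ps (a2 f) = a0 (ps f),
      forall f, pp (a2 f) = a1 (pp f),
      forall n, pt (a1 n) = a0 (pt n)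
    & forall n g, pp g = a1 n -> exists! f, pp f = n /\ a2 f = g].

Record subtree (T : tree) := Subtree {
  st_E : {set P0 T}; st_N : {set P1 T}; st_r : P0 T;
  st_ok : @is_subtree_data T st_E st_N st_r }.

Definition leaves (T : tree) (A : subtree T) : {set P0 T} :=
  st_E A :\: (@pt T @: st_N A).

Record msubtree (T : tree) := MSubtree {
  ms_tree : subtree T; ms_leaf : P0 T; ms_ok : ms_leaf \in leaves ms_tree }.

(* unit of the monad: e |-> trivial subtree with single edge e (graph form) *)
Definition is_unit (T : tree) (e : P0 T) (A : subtree T) : Prop :=
  st_E A = [set e] /\ st_N A = set0.

(* multiplication (grafting), graph form: C is the grafting of the family
   (B l)_{l leaf of A} onto A, where root (B l) = l. *)
Definition is_graft (T : tree) (A : subtree T) (B : P0 T -> subtree T)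
  (C : subtree T) : Prop :=
  [/\ forall l, l \in leaves A -> st_r (B l) = l,
      st_E C = st_E A :|: \bigcup_(l in leaves A) st_E (B l),
      st_N C = st_N A :|: \bigcup_(l in leaves A) st_N (B l)
    & st_r C = st_r A].

Definition is_max (T : tree) (A : subtree T) : Prop :=
  st_E A = setT /\ st_N A = setT.

(* Morphisms of Tree: monad morphisms  overline S -> overline T. *)
Record tmor (S T : tree) := TMor {
  m0 : P0 S -> P0 T;
  m1 : subtree S -> subtree T;
  m2 : msubtree S -> msubtree T;
  m_leaf : forall x, ms_leaf (m2 x) = m0 (ms_leaf x);
  m_forget : forall x, ms_tree (m2 x) = m1 (ms_tree x);
  m_root : forall A, st_r (m1 A) = m0 (st_r A);
  m_cart : forall A y, ms_tree y = m1 A ->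
             exists! x, ms_tree x = A /\ m2 x = y;
  m_unit : forall e A, is_unit e A -> is_unit (m0 e) (m1 A);
  m_mult : forall A B C, is_graft A B C ->
             forall B' : P0 T -> subtree T,
             (forall l, l \in leaves A -> B' (m0 l) = m1 (B l)) ->
             is_graft (m1 A) B' (m1 C) }.

Definition is_comp (A B C : tree) (f : tmor A B) (g : tmor B C) (h : tmor A C)
  : Prop :=
  [/\ forall x, m0 h x = m0 g (m0 f x),
      forall x, m1 h x = m1 g (m1 f x)
    & forall x, m2 h x = m2 g (m2 f x)].

Definition comm_sq (A B C D : tree) (f1 : tmor A B) (g1 : tmor B D)
  (f2 : tmor A C) (g2 : tmor C D) : Prop :=
  [/\ forall x, m0 g1 (m0 f1 x) = m0 g2 (m0 f2 x),
      forall x, m1 g1 (m1 f1 x) = m1 g2 (m1 f2 x)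
    & forall x, m2 g1 (m2 f1 x) = m2 g2 (m2 f2 x)].

Definition meq (A B : tree) (f g : tmor A B) : Prop :=
  [/\ forall x, m0 f x = m0 g x, forall x, m1 f x = m1 g x
    & forall x, m2 f x = m2 g x].

Definition is_iso (A B : tree) (f : tmor A B) : Prop :=
  exists g : tmor B A,
    [/\ (forall x, m0 g (m0 f x) = x) /\ (forall x, m0 f (m0 g x) = x),
        (forall x, m1 g (m1 f x) = x) /\ (forall x, m1 f (m1 g x) = x)
      & (forall x, m2 g (m2 f x) = x) /\ (forall x, m2 f (m2 g x) = x)].

Definition boundary_preserving (S T : tree) (phi : tmor S T) : Prop :=
  forall A, is_max A -> is_max (m1 phi A).

Definition free_mor (S T : tree) (phi : tmor S T) : Prop :=
  exists a0 a1 a2, temb a0 a1 a2 /\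
    (forall e, m0 phi e = a0 e) /\
    (forall A, st_E (m1 phi A) = a0 @: st_E A /\ st_N (m1 phi A) = a1 @: st_N A).

Definition morclass := forall S T : tree, tmor S T -> Prop.

Definition OFS (L R : morclass) : Prop :=
  (forall S T (f : tmor S T), is_iso f -> L S T f) /\
  (forall S T (f : tmor S T), is_iso f -> R S T f) /\
  (forall A B C (f : tmor A B) (g : tmor B C) (h : tmor A C),
      L _ _ f -> L _ _ g -> is_comp f g h -> L _ _ h) /\
  (forall A B C (f : tmor A B) (g : tmor B C) (h : tmor A C),
      R _ _ f -> R _ _ g -> is_comp f g h -> R _ _ h) /\
  (forall S T (phi : tmor S T), exists (X : tree) (e : tmor S X) (m : tmor X T),
      L _ _ e /\ R _ _ m /\ is_comp e m phi) /\
  (forall A B C D (e : tmor A B) (m : tmor C D) (u : tmor A C) (v : tmor B D),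
      L _ _ e -> R _ _ m -> comm_sq u m e v ->
      exists d : tmor B C, is_comp e d u /\ is_comp d m v /\
        forall d' : tmor B C, is_comp e d' u -> is_comp d' m v -> meq d d').

Definition unique_factorisation (L R : morclass) : Prop :=
  forall S T (phi : tmor S T) (X X' : tree) (e : tmor S X) (m : tmor X T)
    (e' : tmor S X') (m' : tmor X' T),
    L _ _ e -> R _ _ m -> is_comp e m phi ->
    L _ _ e' -> R _ _ m' -> is_comp e' m' phi ->
    exists i : tmor X X', is_iso i /\ is_comp e i e' /\ is_comp i m' m /\
      forall j : tmor X X', is_comp e j e' -> is_comp j m' m -> meq i j.

(* The edges of a tree are partially ordered by "e lies below e'" (iterating
   sigma from e reaches e'); a subtree consists of the edges below its root
   and not strictly below any of its leaves.  A monad morphism phi preserves grafting; since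
   every inclusion of subtrees A <= C exhibits A as a piece of a two-step
   grafting decomposition of C, phi_1 is monotone for inclusion, and phi_0 maps
   the edges of A into phi_1(A).  A TEmb-morphism is injective on edges and
   nodes, and the free morphism it induces is injective on subtrees; hence any
   morphism whose subtrees all land inside the image of a free morphism m
   factors through m, uniquely. *)
From mathcomp Require Import all_boot.
From Stdlib Require Import Classical ClassicalEpsilon ProofIrrelevance.
Set Implicit Arguments. Unset Strict Implicit. Unset Printing Implicit Defensive.

Definition asbool (P : Prop) : bool :=
  if excluded_middle_informative P then true else false.

Lemma asboolP P : reflect P (asbool P).
Proof. by rewrite /asbool; case: excluded_middle_informative => h; constructor. Qed.

Lemma sigma_in_eq (P : poly) (F : {set P2 P}) r e f :
  {in F &, injective (@ps P)} -> f \in F -> ps f = e -> sigma_in F r e = pt (pp f).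
Proof.
move=> injF fF <-; rewrite /sigma_in; case: pickP => [g /andP [gF /eqP eg]|/(_ f)].
  by rewrite (injF _ _ gF fF eg).
by rewrite fF eqxx.
Qed.

Lemma sigma_in_none (P : poly) (F : {set P2 P}) r e :
  (forall f, f \in F -> ps f != e) -> sigma_in F r e = r.
Proof.
move=> Fe; rewrite /sigma_in; case: pickP => // g /andP [gF eg].
by rewrite (negbTE (Fe g gF)) in eg.
Qed.

Definition troot (T : tree) : P0 T :=
  proj1_sig (constructive_indefinite_description _ (tree_ax T)).

Lemma troot_ok (T : tree) : @is_subtree_data T setT setT (troot T).
Proof. exact: (proj2_sig (constructive_indefinite_description _ (tree_ax T))). Qed.

Section TreeOrder.
Variable T : tree.

Definition sigma : P0 T -> P0 T := sigma_in [set f | pp f \in [set: P1 T]] (troot T).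

Lemma ps_inj : injective (@ps T).
Proof.
case: (troot_ok T) => _ [_ sinj] _ _ _ x y; apply: sinj; by rewrite inE in_setT.
Qed.

Lemma pt_inj : injective (@pt T).
Proof. case: (troot_ok T) => _ [tinj _] _ _ _ x y; apply: tinj; exact: in_setT. Qed.

Lemma ps_neq_root f : ps f != troot T.
Proof.
case: (troot_ok T) => _ _ _ Hroot _; rewrite -(Hroot _ (in_setT _)).
by apply/negPn/imsetP; exists f; rewrite // inE in_setT.
Qed.

Lemma ps_onto_nonroot e : e != troot T -> exists f, ps f = e.
Proof.
case: (troot_ok T) => _ _ _ Hroot _; rewrite -(Hroot _ (in_setT _)).
by move=> /negPn/imsetP [f _ ->]; exists f.
Qed.

Lemma sigma_ps f : sigma (ps f) = pt (pp f).
Proof.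
by apply: sigma_in_eq; rewrite ?inE ?in_setT // => x y _ _; apply: ps_inj.
Qed.

Lemma sigma_root : sigma (troot T) = troot T.
Proof. apply: sigma_in_none => f _; exact: ps_neq_root. Qed.

Lemma sigma_reach e : exists k, iter k sigma e = troot T.
Proof. case: (troot_ok T) => _ _ _ _ reach; exact: reach (in_setT _). Qed.

Lemma iter_sigma_root k : iter k sigma (troot T) = troot T.
Proof. by elim: k => //= k ->; rewrite sigma_root. Qed.

Lemma sigma_cycle x k : iter k.+1 sigma x = x -> x = troot T.
Proof.
move=> cyc; case: (sigma_reach x) => m Hm.
have iter_cyc j : iter (j * k.+1) sigma x = x.
  by elim: j => [//|j IH]; rewrite mulSn iterD IH cyc.
have := iter_cyc m; have -> : m * k.+1 = (m * k.+1 - m) + m by rewrite subnK // leq_pmulr.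
by rewrite iterD Hm iter_sigma_root => ->.
Qed.

Lemma sigma_fixed x : sigma x = x -> x = troot T.
Proof. exact: (@sigma_cycle x 0). Qed.

Lemma no_loop (f : P2 T) : ps f != pt (pp f).
Proof.
apply/eqP => E; have := sigma_ps f; rewrite -E => /sigma_fixed /eqP.
by rewrite (negbTE (ps_neq_root f)).
Qed.

Definition below (x y : P0 T) : bool := asbool (exists k, iter k sigma x = y).

Lemma belowP x y : reflect (exists k, iter k sigma x = y) (below x y).
Proof. exact: asboolP. Qed.

Lemma below_refl x : below x x.
Proof. by apply/belowP; exists 0. Qed.

Lemma below_trans x y z : below x y -> below y z -> below x z.
Proof.
by move=> /belowP [a Ha] /belowP [b Hb]; apply/belowP; exists (b + a); rewrite iterD Ha.
Qed.

Lemma below_root x : below x (troot T).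
Proof. apply/belowP; exact: sigma_reach. Qed.

Lemma below_antisym x y : below x y -> below y x -> x = y.
Proof.
move=> /belowP [[|a] Ha] /belowP [b Hb]; first by [].
have : iter (b + a.+1) sigma x = x by rewrite iterD Ha Hb.
rewrite addnS => /sigma_cycle xr.
by rewrite -Ha xr iter_sigma_root.
Qed.

Lemma below_sigma x : below x (sigma x).
Proof. by apply/belowP; exists 1. Qed.

Lemma below_sigmaW x y : below x y -> x != y -> below (sigma x) y.
Proof.
move=> /belowP [[|k] /= Hk] ne; first by rewrite Hk eqxx in ne.
by apply/belowP; exists k; rewrite -iterSr.
Qed.

Lemma below_last_step x l : below x l -> x != l ->
  exists z, [/\ below x z, z != troot T & sigma z = l].
Proof.
move=> /belowP [k]; elim: k x => [|k IH] x /=; first by move=> ->; rewrite eqxx.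
rewrite -iterS iterSr => Hk ne.
case: (eqVneq (sigma x) l) => [sx|ne'].
  exists x; split => //; first exact: below_refl.
  by apply/eqP => xr; rewrite xr sigma_root in sx; rewrite xr sx eqxx in ne.
case: (IH _ Hk ne') => z [xz zr zl]; exists z; split => //.
exact: below_trans (below_sigma x) xz.
Qed.

End TreeOrder.

Section Subtrees.
Variable T : tree.
Implicit Types A B C : subtree T.

Lemma sub_pt_in A n : n \in st_N A -> pt n \in st_E A.
Proof. by case: (st_ok A) => [[tE _] _ _ _ _]; apply: tE. Qed.

Lemma sub_ps_in A (f : P2 T) : pp f \in st_N A -> ps f \in st_E A.
Proof. by case: (st_ok A) => [[_ sE] _ _ _ _] fN; apply: sE; rewrite inE. Qed.

Lemma sub_root A : st_r A \in st_E A.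
Proof. by case: (st_ok A). Qed.

Lemma sub_flag A e : e \in st_E A -> e != st_r A ->
  exists2 f : P2 T, pp f \in st_N A & ps f = e.
Proof.
case: (st_ok A) => _ _ _ Hroot _ eE ne; move: (Hroot _ eE); rewrite (negbTE ne).
by move/negbFE/imsetP => [f]; rewrite inE => fN ->; exists f.
Qed.

Lemma sub_ps_neq_root A (f : P2 T) : pp f \in st_N A -> ps f != st_r A.
Proof.
case: (st_ok A) => _ _ rE Hroot _ fN; apply/eqP => E.
move: (Hroot _ rE); rewrite eqxx -E => /negP; apply; apply/imsetP; exists f => //.
by rewrite inE.
Qed.

Lemma sub_sigma A e : e \in st_E A -> e != st_r A -> sigma e \in st_E A.
Proof.
by move=> eE ne; case: (sub_flag eE ne) => f fN <-; rewrite sigma_ps sub_pt_in.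
Qed.

Lemma sub_sigma_in A e : e \in st_E A -> e != st_r A ->
  sigma_in [set f | pp f \in st_N A] (st_r A) e = sigma e.
Proof.
move=> eE ne; case: (sub_flag eE ne) => f fN <-; rewrite sigma_ps.
by apply: sigma_in_eq; rewrite ?inE // => x y _ _; apply: ps_inj.
Qed.

Lemma sub_interval A e : e \in st_E A ->
  below e (st_r A) /\ forall y, below e y -> below y (st_r A) -> y \in st_E A.
Proof.
case: (st_ok A) => _ _ _ _ reach eE; case: (reach _ eE) => k.
elim: k e eE => [|k IH] e eE /=.
  move=> ->; split=> [|y h1 h2]; first exact: below_refl.
  by rewrite -(below_antisym h1 h2) sub_root.
rewrite -iterS iterSr => Hk.
case: (eqVneq e (st_r A)) => [->|ne].
  split=> [|y h1 h2]; first exact: below_refl.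
  by rewrite -(below_antisym h1 h2) sub_root.
rewrite sub_sigma_in // in Hk.
case: (IH _ (sub_sigma eE ne) Hk) => sr conv; split.
  exact: below_trans (below_sigma e) sr.
move=> y ey yr; case: (eqVneq e y) => [<-//|ney].
by apply: conv => //; apply: below_sigmaW.
Qed.

Lemma sub_below_root A e : e \in st_E A -> below e (st_r A).
Proof. by case/sub_interval. Qed.

Lemma leafP A l : reflect (l \in st_E A /\ l \notin (@pt T) @: st_N A) (l \in leaves A).
Proof. by rewrite /leaves inE andbC; apply: andP. Qed.

Lemma leaf_neq_pt A l n : l \in leaves A -> n \in st_N A -> pt n != l.
Proof.
case/leafP => _ H nN; apply/eqP => E; move/negP: H; apply; apply/imsetP; by exists n.
Qed.

Lemma sub_nonleaf A y : y \in st_E A -> y \notin leaves A ->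
  exists2 n, n \in st_N A & pt n = y.
Proof.
move=> yE yL; have : y \in (@pt T) @: st_N A by apply: contraR yL => h; apply/leafP.
by case/imsetP => n nN ->; exists n.
Qed.

Lemma sub_nodeE A n : (n \in st_N A) = (pt n \in st_E A) && (pt n \notin leaves A).
Proof.
apply/idP/andP => [nN|[tE tL]].
  by split; [exact: sub_pt_in | apply/negP => /leafP [_]; rewrite imset_f].
by case: (sub_nonleaf tE tL) => m mN /pt_inj <-.
Qed.

Lemma sub_leaf_min A l e : l \in leaves A -> e \in st_E A -> below e l -> e = l.
Proof.
move=> lL eE el; apply/eqP/negPn/negP => ne.
case: (below_last_step el ne) => z [ez zr zl].
have lr : below l (st_r A) by apply: sub_below_root; case/leafP: lL.
have zl' : below z l by rewrite -zl below_sigma.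
have zE : z \in st_E A by case: (sub_interval eE) => _; apply=> //; exact: below_trans lr.
have zne : z != st_r A.
  apply: contra zr => /eqP zrA; apply/eqP/sigma_fixed.
  by rewrite zl (below_antisym lr) -?zrA.
case: (sub_flag zE zne) => f fN fz.
by move: (leaf_neq_pt lL fN); rewrite -sigma_ps fz zl eqxx.
Qed.

Lemma subtree_eq A B : st_E A = st_E B -> st_N A = st_N B -> A = B.
Proof.
case: A => EA NA rA okA; case: B => EB NB rB okB /= eE eN; subst EB NB.
have er : rA = rB.
  case: okA => _ _ rAE HA _; case: okB => _ _ _ HB _.
  by apply/eqP; rewrite -(HB _ rAE) (HA _ rAE).
by subst rB; f_equal; exact: proof_irrelevance.
Qed.

(* Introduction rule: injectivity of s and t and reachability of the root are
   inherited from T, so only closure and the root condition need checking. *)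
Lemma subtree_dataI (E : {set P0 T}) (N : {set P1 T}) r :
  r \in E -> (forall n, n \in N -> pt n \in E) ->
  (forall f : P2 T, pp f \in N -> ps f \in E) ->
  (forall e, e \in E -> e != r -> exists2 f : P2 T, pp f \in N & ps f = e) ->
  (forall f : P2 T, pp f \in N -> ps f != r) -> is_subtree_data E N r.
Proof.
move=> rE tE sE flag nroot; split.
- by split=> // f; rewrite inE; apply: sE.
- by split=> x y _ _; [apply: pt_inj | apply: ps_inj].
- done.
- move=> e eE; case: (eqVneq e r) => [->|ne].
    apply/negP => /imsetP [f]; rewrite inE => fN Ef.
    by move: (nroot f fN); rewrite Ef eqxx.
  case: (flag _ eE ne) => f fN <-; apply/negbF/imsetP; exists f => //; by rewrite inE.
- move=> e eE; case: (sigma_reach e) => k; elim: k e eE => [|k IH] e eE /=.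
    move=> er; case: (eqVneq e r) => [->|ne]; first by exists 0.
    by case: (flag _ eE ne) => f _ ef; move: (ps_neq_root f); rewrite ef er eqxx.
  rewrite -iterS iterSr => Hk; case: (eqVneq e r) => [->|ne]; first by exists 0.
  case: (flag _ eE ne) => f fN ef.
  have sig : sigma_in [set f | pp f \in N] r e = sigma e.
    by rewrite -ef sigma_ps; apply: sigma_in_eq; rewrite ?inE // => x y _ _; apply: ps_inj.
  have sE' : sigma e \in E by rewrite -ef sigma_ps; apply: tE.
  by case: (IH _ sE' Hk) => j Hj; exists j.+1; rewrite iterSr sig.
Qed.

Lemma unit_ok (e : P0 T) : is_subtree_data [set e] (set0 : {set P1 T}) e.
Proof.
apply: subtree_dataI; rewrite ?set11 //; try by move=> ?; rewrite in_set0.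
by move=> x; rewrite inE => /eqP ->; rewrite eqxx.
Qed.

Definition unit_subtree (e : P0 T) : subtree T := Subtree (unit_ok e).

Definition max_subtree : subtree T := Subtree (troot_ok T).

Lemma max_subtreeP A : is_max A -> A = max_subtree.
Proof. by case=> h1 h2; apply: subtree_eq. Qed.

Lemma sub_max (A : subtree T) :
  st_E A \subset st_E max_subtree /\ st_N A \subset st_N max_subtree.
Proof. by split; apply/subsetP => x; rewrite in_setT. Qed.

Lemma corolla_ok n :
  is_subtree_data (pt n |: [set ps f | f in [set f : P2 T | pp f == n]]) [set n] (pt n).
Proof.
apply: subtree_dataI.
- by rewrite setU11.
- by move=> m; rewrite inE => /eqP ->; rewrite setU11.
- by move=> f fn; apply/setU1P; right; apply: imset_f; rewrite inE -in_set1.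
- move=> e; case/setU1P => [->|/imsetP [f]]; first by rewrite eqxx.
  by rewrite inE => fn -> _; exists f; rewrite ?inE.
- by move=> f; rewrite inE => /eqP <-; exact: no_loop.
Qed.

Definition corolla n : subtree T := Subtree (corolla_ok n).

End Subtrees.

Lemma msub_eq (T : tree) (x y : msubtree T) :
  ms_tree x = ms_tree y -> ms_leaf x = ms_leaf y -> x = y.
Proof.
case: x => tx lx ox; case: y => ty ly oy /= E1 E2; subst ty ly.
by f_equal; exact: bool_irrelevance.
Qed.

Section Decompositions.
Variable T : tree.
Implicit Types (A C : subtree T) (L : {set P0 T}).

Definition cutE C L := [set e in st_E C | ~~ [exists l in L, below e l && (e != l)]].
Definition cutN C L := [set n in st_N C | ~~ [exists l in L, below (pt n) l]].

Lemma cut_ok C L : L \subset st_E C -> is_subtree_data (cutE C L) (cutN C L) (st_r C).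
Proof.
move=> LE; apply: subtree_dataI.
- rewrite inE sub_root /=; apply/exists_inP => [[l lL /andP [rl ne]]].
  by rewrite (below_antisym rl (sub_below_root (subsetP LE _ lL))) eqxx in ne.
- move=> n; rewrite !inE => /andP [nN nL]; rewrite sub_pt_in //=.
  by apply: contra nL => /exists_inP [l lL /andP [h _]]; apply/exists_inP; exists l.
- move=> f; rewrite !inE => /andP [nN nL]; rewrite sub_ps_in //=.
  apply: contra nL => /exists_inP [l lL /andP [h ne]]; apply/exists_inP; exists l => //.
  by rewrite -sigma_ps below_sigmaW.
- move=> e; rewrite inE => /andP [eE eL] ne.
  case: (sub_flag eE ne) => f fN ef; exists f => //; rewrite inE fN /=.
  apply/exists_inP => [[l lL tl]].
  have el : below e l by apply: below_trans tl; rewrite -ef -sigma_ps below_sigma.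
  case: (eqVneq e l) => [El|nel]; last first.
    by move/negP: eL; apply; apply/exists_inP; exists l; rewrite ?el.
  subst l; have /sigma_fixed er : sigma e = e.
    by apply: below_antisym; [rewrite -ef sigma_ps ef | exact: below_sigma].
  by move: (ps_neq_root f); rewrite ef er eqxx.
- by move=> f; rewrite inE => /andP [fN _]; exact: sub_ps_neq_root.
Qed.

Definition cut C L (H : L \subset st_E C) := Subtree (cut_ok H).

Definition upE C x := [set e in st_E C | below e x].
Definition upN C x := [set n in st_N C | below (pt n) x].

Lemma up_ok C x : x \in st_E C -> is_subtree_data (upE C x) (upN C x) x.
Proof.
move=> xE; apply: subtree_dataI.
- by rewrite inE xE below_refl.
- by move=> n; rewrite !inE => /andP [nN ->]; rewrite sub_pt_in.
- move=> f; rewrite !inE => /andP [nN h]; rewrite sub_ps_in //=.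
  by apply: below_trans h; rewrite -sigma_ps below_sigma.
- move=> e; rewrite inE => /andP [eE ex] ne.
  have neC : e != st_r C.
    by apply: contra ne => /eqP er; rewrite er (below_antisym (sub_below_root xE)) // -er.
  case: (sub_flag eE neC) => f fN ef; exists f => //.
  by rewrite inE fN -sigma_ps ef below_sigmaW.
- move=> f; rewrite inE => /andP [fN h]; apply/eqP => E.
  rewrite -E -sigma_ps in h.
  have /sigma_fixed /eqP : sigma (ps f) = ps f by apply: below_antisym => //; exact: below_sigma.
  by rewrite (negbTE (ps_neq_root f)).
Qed.

(* up C x: the subtree of C rooted at x, made of the edges e of C with
   below e x (C itself if x is not an edge of C, to get a total function). *)
Lemma up_total_ok C x :
  is_subtree_data (if x \in st_E C then upE C x else st_E C)
    (if x \in st_E C then upN C x else st_N C) (if x \in st_E C then x else st_r C).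
Proof. by case: ifP => h; [exact: up_ok h | exact: st_ok]. Qed.

Definition up C x : subtree T := Subtree (up_total_ok C x).

Lemma upE_spec C x : x \in st_E C ->
  [/\ st_E (up C x) = upE C x, st_N (up C x) = upN C x & st_r (up C x) = x].
Proof. by move=> h; rewrite /= h. Qed.

Definition antichain L := forall l1 l2, l1 \in L -> l2 \in L -> below l1 l2 -> l1 = l2.

Lemma cut_leaves C L (H : L \subset st_E C) : antichain L -> L \subset leaves (cut H).
Proof.
move=> AC; apply/subsetP => l lL; apply/leafP; split.
  rewrite /= inE (subsetP H _ lL) /=; apply/exists_inP => [[l' l'L /andP [h ne]]].
  by rewrite (AC _ _ lL l'L h) eqxx in ne.
apply/imsetP => [[n]]; rewrite /= inE => /andP [_ /exists_inP nL] E; apply: nL.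
by exists l => //; rewrite -E below_refl.
Qed.

Lemma cut_leaf_in C L (H : L \subset st_E C) l : l \in leaves (cut H) -> l \in st_E C.
Proof. by case/leafP; rewrite /= inE => /andP []. Qed.

Lemma graft_cut_up C L (H : L \subset st_E C) : antichain L -> is_graft (cut H) (up C) C.
Proof.
move=> AC; have Lleaf := subsetP (cut_leaves H AC); split => //.
- by move=> l /cut_leaf_in lE; case: (upE_spec lE).
- apply/setP => e; rewrite inE; apply/idP/idP.
    move=> eE; case: (boolP [exists l in L, below e l && (e != l)]); last first.
      by move=> h; rewrite /= inE eE h.
    case/exists_inP => l lL /andP [el _]; apply/orP; right.
    apply/bigcupP; exists l; first exact: Lleaf.
    by case: (upE_spec (subsetP H _ lL)) => -> _ _; rewrite inE eE el.
  case/orP; first by rewrite /= inE => /andP [].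
  case/bigcupP => l /cut_leaf_in lE.
  by case: (upE_spec lE) => -> _ _; rewrite inE => /andP [].
- apply/setP => n; rewrite inE; apply/idP/idP.
    move=> nN; case: (boolP [exists l in L, below (pt n) l]); last first.
      by move=> h; rewrite /= inE nN h.
    case/exists_inP => l lL el; apply/orP; right.
    apply/bigcupP; exists l; first exact: Lleaf.
    by case: (upE_spec (subsetP H _ lL)) => _ -> _; rewrite inE nN el.
  case/orP; first by rewrite /= inE => /andP [].
  case/bigcupP => l /cut_leaf_in lE.
  by case: (upE_spec lE) => _ -> _; rewrite inE => /andP [].
Qed.

Lemma in_subtree_between A C : st_E A \subset st_E C -> st_N A \subset st_N C ->
  forall e, e \in st_E C -> below e (st_r A) ->
  (forall l, l \in leaves A -> below e l -> e = l) -> e \in st_E A.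
Proof.
move=> sE sN e eE /belowP [k Hk]; elim: k e eE Hk => [|k IH] e eE /=.
  by move=> -> _; exact: sub_root.
rewrite -iterS iterSr => Hk Hl.
case: (eqVneq e (st_r A)) => [->|ne]; first exact: sub_root.
have er : below e (st_r A) by apply/belowP; exists k.+1; rewrite iterSr.
have neC : e != st_r C.
  apply: contra ne => /eqP eC; apply/eqP/below_antisym => //.
  by rewrite eC sub_below_root // (subsetP sE _ (sub_root A)).
have sA : sigma e \in st_E A.
  apply: IH => [||l lL h]; [exact: sub_sigma | exact: Hk |].
  have El := Hl l lL (below_trans (below_sigma e) h); subst l.
  by apply: below_antisym => //; exact: below_sigma.
case: (sub_flag eE neC) => f fN ef.
case: (boolP (sigma e \in leaves A)) => [sL|sNL].
  move: (Hl _ sL (below_sigma e)) => /esym/sigma_fixed er'.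
  by move: (ps_neq_root f); rewrite ef er' eqxx.
case: (sub_nonleaf sA sNL) => n nN E; rewrite -ef sigma_ps in E; move/pt_inj: E => E.
by rewrite -ef; apply: sub_ps_in; rewrite -E.
Qed.

(* Cutting the subtree of C rooted at the root of A at the leaves of A gives
   back A; with graft_cut_up this exhibits A as a grafting piece of a grafting
   piece of C. *)
Lemma cut_up_subtree A C (sE : st_E A \subset st_E C) (sN : st_N A \subset st_N C)
  (H : leaves A \subset st_E (up C (st_r A))) : cut H = A.
Proof.
have rAC : st_r A \in st_E C := subsetP sE _ (sub_root A).
case: (upE_spec rAC) => UE UN _.
apply: subtree_eq => /=; apply/setP.
  move=> e; rewrite inE UE inE; apply/idP/idP.
    case/andP => /andP [eE er] h; apply: (in_subtree_between sE sN) => // l lL el.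
    apply/eqP/negPn/negP => ne; move/negP: h; apply; apply/exists_inP; exists l => //.
    by rewrite el.
  move=> eA; rewrite (subsetP sE _ eA) (sub_below_root eA) /=.
  apply/exists_inP => [[l lL /andP [el ne]]].
  by rewrite (sub_leaf_min lL eA el) eqxx in ne.
move=> n; rewrite inE UN inE; apply/idP/idP.
  case/andP => /andP [nN nr] h.
  have tA : pt n \in st_E A.
    apply: (in_subtree_between sE sN) => //; first exact: sub_pt_in.
    by move=> l lL el; move/negP: h; case; apply/exists_inP; exists l.
  rewrite sub_nodeE tA /=; apply: contra h => tL.
  by apply/exists_inP; exists (pt n); rewrite ?below_refl.
move=> nA; rewrite (subsetP sN _ nA) (sub_below_root (sub_pt_in nA)) /=.
apply/exists_inP => [[l lL el]].
by move: (leaf_neq_pt lL nA); rewrite (sub_leaf_min lL (sub_pt_in nA) el) eqxx.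
Qed.

End Decompositions.

Section MonadMorphisms.
Variables (S T : tree) (phi : tmor S T).

Lemma m_leaves A : leaves (m1 phi A) = m0 phi @: leaves A.
Proof.
apply/setP => l'; apply/idP/imsetP.
  move=> l'L; case: (@m_cart _ _ phi A (MSubtree l'L) erefl).
  move=> x [[Ex Ey] _]; exists (ms_leaf x); first by rewrite -Ex; exact: ms_ok.
  by rewrite -m_leaf Ey.
by case=> l lL ->; have := ms_ok (m2 phi (MSubtree lL)); rewrite m_leaf m_forget.
Qed.

Lemma m_leaf_inj A : {in leaves A &, injective (m0 phi)}.
Proof.
move=> l1 l2 h1 h2 E.
pose x1 := MSubtree h1; pose x2 := MSubtree h2.
have E2 : m2 phi x1 = m2 phi x2.
  by apply: msub_eq; rewrite ?m_forget ?m_leaf.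
case: (@m_cart _ _ phi A (m2 phi x1)); first by rewrite m_forget.
move=> x [_ uniq_x].
have : x1 = x2 by rewrite -(uniq_x x1 (conj erefl erefl)) (uniq_x x2 (conj erefl (esym E2))).
by move=> /(congr1 (@ms_leaf S)).
Qed.

(* The image of each piece of a grafting is contained in the image of the
   grafted subtree: transport the family B along phi_0, which is injective on
   leaves, and apply preservation of grafting. *)
Lemma m_graft_pieces A B C : is_graft A B C ->
  [/\ st_E (m1 phi A) \subset st_E (m1 phi C), st_N (m1 phi A) \subset st_N (m1 phi C)
    & forall l, l \in leaves A -> st_E (m1 phi (B l)) \subset st_E (m1 phi C) /\
                                 st_N (m1 phi (B l)) \subset st_N (m1 phi C)].
Proof.
move=> G.
pose B' z := if [pick l in leaves A | m0 phi l == z] is Some l then m1 phi (B l)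
             else m1 phi A.
have HB' l : l \in leaves A -> B' (m0 phi l) = m1 phi (B l).
  move=> lL; rewrite /B'; case: pickP => [l' /andP [l'L /eqP E]|/(_ l)].
    by rewrite (m_leaf_inj l'L lL E).
  by rewrite lL eqxx.
case: (@m_mult _ _ phi _ _ _ G _ HB') => _ -> -> _.
split; rewrite ?subsetUl // => l lL.
have lL' : m0 phi l \in leaves (m1 phi A) by rewrite m_leaves imset_f.
by rewrite -HB' //; split; apply/subsetP => x xB; apply/setUP; right;
  apply/bigcupP; exists (m0 phi l).
Qed.

(* If A <= C, then A is a grafting piece of the subtree of C rooted at the
   root of A, which is itself a grafting piece of C. *)
Lemma m1_mono (A C : subtree S) : st_E A \subset st_E C -> st_N A \subset st_N C ->
  st_E (m1 phi A) \subset st_E (m1 phi C) /\ st_N (m1 phi A) \subset st_N (m1 phi C).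
Proof.
move=> sE sN.
have rAC : st_r A \in st_E C := subsetP sE _ (sub_root A).
have H1 : [set st_r A] \subset st_E C by rewrite sub1set.
have AC1 : antichain [set st_r A] by move=> l1 l2; rewrite !inE => /eqP -> /eqP ->.
have rL : st_r A \in leaves (cut H1) := subsetP (cut_leaves H1 AC1) _ (set11 _).
case: (m_graft_pieces (graft_cut_up H1 AC1)) => _ _ /(_ _ rL) [sE1 sN1].
have H2 : leaves A \subset st_E (up C (st_r A)).
  apply/subsetP => l /leafP [lE _]; case: (upE_spec rAC) => -> _ _.
  by rewrite inE (subsetP sE _ lE) sub_below_root.
have AC2 : antichain (leaves A).
  by move=> l1 l2 h1 h2 le12; apply: (sub_leaf_min h2) => //; case/leafP: h1.
case: (m_graft_pieces (graft_cut_up H2 AC2)); rewrite (cut_up_subtree sE sN) => sE2 sN2 _.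
by split; [exact: subset_trans sE2 sE1 | exact: subset_trans sN2 sN1].
Qed.

(* phi_0 maps the edges of A into phi_1(A): compare A with a unit subtree. *)
Lemma m0_in (A : subtree S) e : e \in st_E A -> m0 phi e \in st_E (m1 phi A).
Proof.
move=> eA; have sE1 : st_E (unit_subtree e) \subset st_E A.
  by apply/subsetP => x; rewrite inE => /eqP ->.
have sN1 : st_N (unit_subtree e) \subset st_N A by apply/subsetP => x; rewrite inE.
apply: (subsetP (proj1 (m1_mono sE1 sN1))).
by have [-> _] := m_unit phi (e := e) (A := unit_subtree e) (conj erefl erefl); rewrite set11.
Qed.

End MonadMorphisms.

Lemma imset_bigcup (aT rT iT jT : finType) (f : aT -> rT) (X : {set aT})
  (I : {set iT}) (F : iT -> {set aT}) (g : iT -> jT) (G : jT -> {set rT}) :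
  (forall i, i \in I -> G (g i) = f @: F i) ->
  f @: (X :|: \bigcup_(i in I) F i) = f @: X :|: \bigcup_(j in g @: I) G j.
Proof.
move=> HG; apply/setP => y; apply/imsetP/setUP.
  case=> x /setUP [xX ->|/bigcupP [i iI xF] ->]; first by left; apply: imset_f.
  by right; apply/bigcupP; exists (g i); rewrite ?imset_f // HG // imset_f.
case=> [/imsetP [x xX ->]|/bigcupP [j /imsetP [i iI ->]]].
  by exists x; rewrite // inE xX.
rewrite HG // => /imsetP [x xF ->]; exists x => //.
by apply/setUP; right; apply/bigcupP; exists i.
Qed.

(* A TEmb-morphism preserves the order towards the root, sends only the root
   to the root, and is therefore injective on edges, and hence on nodes. *)
Section Embeddings.
Variables (S T : tree) (a0 : P0 S -> P0 T) (a1 : P1 S -> P1 T) (a2 : P2 S -> P2 T).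
Hypothesis Ha : temb a0 a1 a2.

Lemma temb_sigma x : x != troot S -> a0 (sigma x) = sigma (a0 x).
Proof. by case: Ha => hs hp ht _ /ps_onto_nonroot [f <-]; rewrite sigma_ps -hs sigma_ps hp ht. Qed.

Lemma temb_nonroot x : x != troot S -> a0 x != troot T.
Proof. by case: Ha => hs _ _ _ /ps_onto_nonroot [f <-]; rewrite -hs ps_neq_root. Qed.

Lemma temb_below u v : below u v -> below (a0 u) (a0 v).
Proof.
move/belowP => [k]; elim: k u => [|k IH] u /=; first by move=> ->; exact: below_refl.
rewrite -iterS iterSr => Hk.
case: (eqVneq u (troot S)) => [ur|ne].
  by rewrite ur sigma_root iter_sigma_root in Hk; rewrite ur -Hk below_refl.
by apply: below_trans (below_sigma (a0 u)) _; rewrite -temb_sigma //; apply: IH.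
Qed.

Lemma temb_root_inj y : a0 (troot S) = a0 y -> y = troot S.
Proof.
move=> E; apply/eqP/negPn/negP => ne.
have h := temb_below (below_root (sigma y)); rewrite temb_sigma // E in h.
have /sigma_fixed /eqP : sigma (a0 y) = a0 y by apply: below_antisym => //; exact: below_sigma.
by rewrite (negbTE (temb_nonroot ne)).
Qed.

Lemma temb_inj0 : injective a0.
Proof.
move=> x y; case: (sigma_reach x) => k; elim: k x y => [|k IH] x y /=.
  by move=> -> /temb_root_inj ->.
rewrite -iterS iterSr => Hk E.
case: (eqVneq x (troot S)) => [xr|nx]; first by rewrite xr in E *; rewrite (temb_root_inj E).
case: (eqVneq y (troot S)) => [yr|ny].
  by rewrite yr in E *; rewrite (temb_root_inj (esym E)).
have E' : sigma x = sigma y by apply: IH Hk _; rewrite !temb_sigma // E.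
case/ps_onto_nonroot: nx => f ef; case/ps_onto_nonroot: ny => g eg; subst x y.
rewrite !sigma_ps in E'; move/pt_inj: E' => E'.
case: Ha => hs hp _ pullback.
have E2 : a2 f = a2 g by apply: ps_inj; rewrite !hs.
case: (pullback (pp f) (a2 f) (hp f)) => f' [_ uniq_f'].
by rewrite -(uniq_f' f (conj erefl erefl)) (uniq_f' g (conj (esym E') (esym E2))).
Qed.

Lemma temb_inj1 : injective a1.
Proof.
by case: Ha => _ _ ht _ n m E; apply: pt_inj; apply: temb_inj0; rewrite -!ht E.
Qed.

Lemma img_ok (A : subtree S) :
  is_subtree_data (a0 @: st_E A) (a1 @: st_N A) (a0 (st_r A)).
Proof.
case: Ha => hs hp ht pullback; apply: subtree_dataI.
- by rewrite imset_f // sub_root.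
- by move=> n /imsetP [m mN ->]; rewrite ht imset_f // sub_pt_in.
- move=> g /imsetP [m mN E]; case: (pullback m g E) => f [[pf <-] _].
  by rewrite hs imset_f // sub_ps_in // pf.
- move=> e /imsetP [x xE ->] ne.
  have nx : x != st_r A by apply: contra ne => /eqP ->.
  case: (sub_flag xE nx) => f fN <-; exists (a2 f); last by rewrite hs.
  by rewrite hp imset_f.
- move=> g /imsetP [m mN E]; case: (pullback m g E) => f [[pf <-] _].
  rewrite hs (inj_eq temb_inj0); apply: sub_ps_neq_root; by rewrite pf.
Qed.

Definition img_subtree (A : subtree S) : subtree T := Subtree (img_ok A).

Lemma img_leaves A : leaves (img_subtree A) = a0 @: leaves A.
Proof.
case: Ha => _ _ ht _; apply/setP => l; apply/idP/idP.
  case/leafP => /imsetP [x xE ->] H; apply: imset_f; apply/leafP; split => //.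
  by apply: contra H => /imsetP [n nN ->]; rewrite -ht imset_f // imset_f.
case/imsetP => x /leafP [xE H] ->; apply/leafP; split; first exact: imset_f.
apply: contra H => /imsetP [n /imsetP [m mN ->]]; rewrite ht => /temb_inj0 ->.
exact: imset_f.
Qed.

Lemma img_mleaf (x : msubtree S) : a0 (ms_leaf x) \in leaves (img_subtree (ms_tree x)).
Proof. by rewrite img_leaves imset_f // ms_ok. Qed.

Definition img_msubtree (x : msubtree S) : msubtree T := MSubtree (img_mleaf x).

Definition free_of_temb : tmor S T.
Proof.
refine (@TMor S T a0 img_subtree img_msubtree
          (fun _ => erefl) (fun _ => erefl) (fun _ => erefl) _ _ _).
- move=> A y Ey.
  have : ms_leaf y \in leaves (img_subtree A) by rewrite -Ey; exact: ms_ok.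
  rewrite img_leaves => /imsetP [l lL El].
  exists (MSubtree lL); split; first by split=> //; apply: msub_eq; rewrite /= ?Ey.
  by move=> x' [Ex' Ey']; apply: msub_eq => //=; apply: temb_inj0; rewrite -El -Ey'.
- by move=> e A [h1 h2]; split; rewrite /= ?h1 ?h2 ?imset_set1 ?imset0.
- move=> A B C [hr hE hN hR] B' HB'; split.
  + by move=> l; rewrite img_leaves => /imsetP [x xL ->]; rewrite HB' //= hr.
  + rewrite /= hE (imset_bigcup _ (g := a0) (G := fun z => st_E (B' z))) ?img_leaves //.
    by move=> i iL; rewrite HB'.
  + rewrite /= hN (imset_bigcup _ (g := a0) (G := fun z => st_N (B' z))) ?img_leaves //.
    by move=> i iL; rewrite HB'.
  + by rewrite /= hR.
Defined.

Lemma free_of_temb_free : free_mor free_of_temb.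
Proof. by exists a0, a1, a2. Qed.

End Embeddings.

Section LiftThroughFree.
Variables (C D : tree) (fm : tmor C D).
Variables (a0 : P0 C -> P0 D) (a1 : P1 C -> P1 D) (a2 : P2 C -> P2 D).
Hypothesis Ha : temb a0 a1 a2.
Hypothesis Hfm0 : forall x, m0 fm x = a0 x.
Hypothesis Hfm1 : forall A, st_E (m1 fm A) = a0 @: st_E A /\ st_N (m1 fm A) = a1 @: st_N A.
Let a0_inj := temb_inj0 Ha.
Let a1_inj := temb_inj1 Ha.

Lemma free_inj1 A1 A2 : m1 fm A1 = m1 fm A2 -> A1 = A2.
Proof.
move=> E; have [e1 n1] := Hfm1 A1; have [e2 n2] := Hfm1 A2.
by apply: subtree_eq; [apply: (imset_inj a0_inj) | apply: (imset_inj a1_inj)];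
  rewrite -?e1 -?e2 -?n1 -?n2 E.
Qed.

Lemma free_inj2 x1 x2 : m2 fm x1 = m2 fm x2 -> x1 = x2.
Proof.
move=> E; apply: msub_eq; first by apply: free_inj1; rewrite -!(m_forget fm) E.
by apply: a0_inj; rewrite -!Hfm0 -!(m_leaf fm) E.
Qed.

(* A chosen preimage under a0 (the root of C if there is none). *)
Definition a0inv (z : P0 D) : P0 C := odflt (troot C) [pick x | a0 x == z].

Lemma a0invK z : (exists x, a0 x = z) -> a0 (a0inv z) = z.
Proof.
case=> x Ex; rewrite /a0inv; case: pickP => [y /eqP //|/(_ x)]; by rewrite Ex eqxx.
Qed.

Lemma a0Kinv x : a0inv (a0 x) = x.
Proof. by apply: a0_inj; apply: a0invK; exists x. Qed.

Lemma free_root A : st_r (m1 fm A) = a0 (st_r A).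
Proof. by rewrite m_root Hfm0. Qed.

Lemma free_leaves A : leaves (m1 fm A) = a0 @: leaves A.
Proof. by rewrite m_leaves; apply: eq_imset => x; exact: Hfm0. Qed.

Section Preimage.
Variable (B : subtree D).
Hypothesis BE : forall e, e \in st_E B -> exists x, a0 x = e.
Hypothesis BN : forall n, n \in st_N B -> exists m, a1 m = n.

Lemma preimage_ok :
  is_subtree_data (a0 @^-1: st_E B) (a1 @^-1: st_N B) (a0inv (st_r B)).
Proof.
case: Ha => hs hp ht pullback.
have ar : a0 (a0inv (st_r B)) = st_r B by apply: a0invK; apply: BE; exact: sub_root.
apply: subtree_dataI.
- by rewrite inE ar sub_root.
- by move=> n; rewrite !inE -ht; exact: sub_pt_in.
- by move=> f; rewrite !inE -hs -hp; exact: sub_ps_in.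
- move=> e; rewrite inE => eE ne.
  have ne' : a0 e != st_r B by apply: contra ne => /eqP <-; rewrite a0Kinv.
  case: (sub_flag eE ne') => g gN Eg.
  case: (BN gN) => n En; case: (pullback n g (esym En)) => f [[pf Ef] _].
  by exists f; [rewrite inE pf En | apply: a0_inj; rewrite -hs Ef].
- move=> f; rewrite inE => fN; apply/eqP => E.
  by move: (sub_ps_neq_root (A := B) (f := a2 f)); rewrite hp fN hs E ar eqxx => /(_ isT).
Qed.

Definition preimage : subtree C := Subtree preimage_ok.

Lemma preimageK : m1 fm preimage = B.
Proof.
have [e1 n1] := Hfm1 preimage; apply: subtree_eq; rewrite ?e1 ?n1 /=; apply/setP => e.
  apply/imsetP/idP => [[x]|eE]; first by rewrite inE => h ->.
  by case: (BE eE) => x Ex; exists x; rewrite // inE Ex.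
apply/imsetP/idP => [[x]|eE]; first by rewrite inE => h ->.
by case: (BN eE) => x Ex; exists x; rewrite // inE Ex.
Qed.
End Preimage.

Lemma free_graft_reflect X B Y G :
  is_graft (m1 fm X) G (m1 fm Y) ->
  (forall l, l \in leaves X -> G (a0 l) = m1 fm (B l)) -> is_graft X B Y.
Proof.
move=> [hr hE hN hR] HG; split.
- by move=> l lL; apply: a0_inj; rewrite -free_root -HG // hr // free_leaves imset_f.
- apply: (imset_inj a0_inj); rewrite -(proj1 (Hfm1 Y)) hE.
  rewrite (imset_bigcup _ (g := a0) (G := fun z => st_E (G z))).
    by rewrite free_leaves (proj1 (Hfm1 X)).
  by move=> i iL; rewrite HG // (proj1 (Hfm1 _)).
- apply: (imset_inj a1_inj); rewrite -(proj2 (Hfm1 Y)) hN.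
  rewrite (imset_bigcup _ (g := a0) (G := fun z => st_N (G z))).
    by rewrite free_leaves (proj2 (Hfm1 X)).
  by move=> i iL; rewrite HG // (proj2 (Hfm1 _)).
- by apply: a0_inj; rewrite -!free_root hR.
Qed.

Variables (B : tree) (v : tmor B D).
Hypothesis HvE : forall A e, e \in st_E (m1 v A) -> exists x, a0 x = e.
Hypothesis HvN : forall A n, n \in st_N (m1 v A) -> exists m, a1 m = n.

Definition lift0 (y : P0 B) : P0 C := a0inv (m0 v y).
Definition lift1 (A : subtree B) : subtree C := preimage (@HvE A) (@HvN A).

Lemma lift1K A : m1 fm (lift1 A) = m1 v A.
Proof. exact: preimageK. Qed.

Lemma lift0K y : a0 (lift0 y) = m0 v y.
Proof.
apply: a0invK; apply: (@HvE (unit_subtree y)).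
by have [-> _] := m_unit v (e := y) (A := unit_subtree y) (conj erefl erefl); exact: set11.
Qed.

Lemma lift_leaf (x : msubtree B) : lift0 (ms_leaf x) \in leaves (lift1 (ms_tree x)).
Proof.
have := m_leaves fm (lift1 (ms_tree x)); rewrite lift1K m_leaves => E.
have : m0 v (ms_leaf x) \in m0 v @: leaves (ms_tree x) by rewrite imset_f // ms_ok.
by rewrite E => /imsetP [z zL]; rewrite Hfm0 /lift0 => ->; rewrite a0Kinv.
Qed.

Definition lift2 (x : msubtree B) : msubtree C := MSubtree (lift_leaf x).

Definition lift_mor : tmor B C.
Proof.
refine (@TMor B C lift0 lift1 lift2 (fun _ => erefl) (fun _ => erefl) _ _ _ _).
- by move=> A; apply: a0_inj; rewrite -free_root lift1K lift0K m_root.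
- move=> A y Ey.
  case: (@m_cart _ _ v A (m2 fm y)); first by rewrite m_forget Ey lift1K.
  move=> x [[Ex Ey'] uniq_x]; exists x; split.
    split=> //; apply: msub_eq => /=; first by rewrite Ex.
    by apply: a0_inj; rewrite lift0K -(m_leaf v) Ey' m_leaf Hfm0.
  move=> x' [Ex' Ey'']; apply: uniq_x; split=> //; apply: msub_eq.
    by rewrite m_forget m_forget Ex' Ey lift1K.
  by rewrite m_leaf m_leaf -lift0K -Hfm0 -Ey''.
- move=> e A hu; have [h1 h2] := m_unit v hu.
  have [e1 n1] := Hfm1 (lift1 A); rewrite lift1K in e1 n1.
  split; first by apply: (imset_inj a0_inj); rewrite -e1 h1 imset_set1 lift0K.
  by apply: (imset_inj a1_inj); rewrite -n1 h2 imset0.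
- move=> A B1 C1 G B' HB'.
  pose B'' z := m1 fm (B' (a0inv z)).
  have HB'' l : l \in leaves A -> B'' (m0 v l) = m1 v (B1 l).
    by move=> lL; rewrite /B'' -(lift1K (B1 l)) -HB'.
  have G' := @m_mult _ _ v _ _ _ G _ HB''; rewrite -!lift1K in G'.
  by apply: (free_graft_reflect G') => l lL; rewrite /B'' a0Kinv.
Defined.

Lemma lift_mor_comp : is_comp lift_mor fm v.
Proof.
split=> [x|A|x]; first by rewrite Hfm0 lift0K.
  by rewrite lift1K.
apply/esym/msub_eq; first by rewrite (m_forget fm) (m_forget lift_mor) (m_forget v) lift1K.
by rewrite (m_leaf fm) (m_leaf lift_mor) (m_leaf v) Hfm0 lift0K.
Qed.

End LiftThroughFree.

Lemma free_injective (C D : tree) (fm : tmor C D) :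
  free_mor fm -> [/\ injective (m0 fm), injective (m1 fm) & injective (m2 fm)].
Proof.
case=> a0 [a1 [a2 [Ha [Hfm0 Hfm1]]]]; split.
- by move=> x y; rewrite !Hfm0 => /(temb_inj0 Ha).
- exact: free_inj1 Ha Hfm1.
- exact: free_inj2 Ha Hfm0 Hfm1.
Qed.

Section SubtreeAsTree.
Variables (T : tree) (K : subtree T).

Definition K0 : finType := {x : P0 T | x \in st_E K}.
Definition K1 : finType := {n : P1 T | n \in st_N K}.
Definition K2 : finType := {f : P2 T | pp f \in st_N K}.

Definition kps (f : K2) : K0 := exist _ (ps (val f)) (sub_ps_in (valP f)).
Definition kpp (f : K2) : K1 := exist _ (pp (val f)) (valP f).
Definition kpt (n : K1) : K0 := exist _ (pt (val n)) (sub_pt_in (valP n)).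

Definition kpoly : poly := @Poly K0 K1 K2 kps kpp kpt.

Definition kroot : K0 := exist _ (st_r K) (sub_root K).

Let FK := [set f : P2 T | pp f \in st_N K].
Let Fk := [set f : P2 kpoly | pp f \in [set: P1 kpoly]].

Lemma ksigma (x : K0) : val (sigma_in Fk kroot x) = sigma_in FK (st_r K) (val x).
Proof.
case: (boolP [exists f in FK, ps f == val x]).
  case/exists_inP => f; rewrite inE => fN /eqP ef.
  pose f' : K2 := exist _ f fN.
  have ex : kps f' = x by apply: val_inj; rewrite /= ef.
  rewrite (@sigma_in_eq kpoly Fk kroot x f') ?inE ?in_setT //.
    by rewrite (@sigma_in_eq T FK _ _ f) ?inE // => a b _ _; apply: ps_inj.
  by move=> a b _ _ /(congr1 val) /ps_inj /val_inj.
move=> H.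
rewrite (@sigma_in_none T FK); last first.
  by move=> f fK; apply: contra H => /eqP E; apply/exists_inP; exists f; rewrite ?E.
rewrite (@sigma_in_none kpoly Fk) // => f _; apply: contra H => /eqP E.
by apply/exists_inP; exists (val f); rewrite ?inE ?(valP f) -?E.
Qed.

Lemma kiter k (x : K0) :
  val (iter k (sigma_in Fk kroot) x) = iter k (sigma_in FK (st_r K)) (val x).
Proof. by elim: k => //= k IH; rewrite ksigma; congr (sigma_in _ _ _). Qed.

Lemma kpoly_tree : is_tree kpoly.
Proof.
case: (st_ok K) => _ [tinj _] _ Hroot reach; exists kroot; split.
- by split=> *; rewrite in_setT.
- split=> a b _ _ /(congr1 val) E; apply: val_inj; first exact: tinj (valP a) (valP b) E.
  exact: ps_inj E.
- by rewrite in_setT.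
- move=> e _; have -> : (e == kroot) = (val e == st_r K) by [].
  rewrite -(Hroot _ (valP e)); congr negb; apply/imsetP/imsetP.
    by case=> f _ ->; exists (val f); rewrite // inE (valP f).
  case=> f; rewrite inE => fN E; exists (exist _ f fN); rewrite ?inE ?in_setT //.
  by apply: val_inj; rewrite /= E.
- move=> e _; case: (reach _ (valP e)) => k Hk; exists k; apply: val_inj.
  by rewrite kiter Hk.
Qed.

Definition subtree_tree : tree := Tree kpoly_tree.

Lemma subtree_incl_temb :
  @temb subtree_tree T (fun x : K0 => val x) (fun n : K1 => val n) (fun f : K2 => val f).
Proof.
split=> // n g E; have gN : pp g \in st_N K by rewrite E (valP (n : K1)).
exists (exist _ g gN : K2); split; first by split=> //; apply: val_inj.
by move=> f [_ Ef]; apply: val_inj; rewrite /= -Ef.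
Qed.

Definition subtree_incl : tmor subtree_tree T := free_of_temb subtree_incl_temb.

Lemma subtree_incl_max : m1 subtree_incl (max_subtree subtree_tree) = K.
Proof.
apply: subtree_eq => /=; apply/setP => x; apply/imsetP/idP => [[y _ ->]|h].
- by case: y.
- by exists (exist _ x h : K0); rewrite ?in_setT.
- by case: y.
- by exists (exist _ x h : K1); rewrite ?in_setT.
Qed.

End SubtreeAsTree.

Section Isomorphisms.
Variables (S T : tree) (f : tmor S T) (g : tmor T S).
Hypothesis gf0 : forall x, m0 g (m0 f x) = x.
Hypothesis fg0 : forall y, m0 f (m0 g y) = y.
Hypothesis gf1 : forall A, m1 g (m1 f A) = A.

Lemma iso_inj0 : injective (m0 f).
Proof. by move=> x y E; rewrite -(gf0 x) E gf0. Qed.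

Lemma iso_E A : st_E (m1 f A) = m0 f @: st_E A.
Proof.
apply/setP => y; apply/idP/imsetP => [yE|[x xE ->]]; last exact: m0_in.
by exists (m0 g y); rewrite ?fg0 // -[in X in _ \in X](gf1 A) m0_in.
Qed.

(* The image of the output of a node is not a leaf of the image of the
   maximal subtree, hence is again the output of a node. *)
Lemma iso_node n : exists n', pt n' = m0 f (pt n).
Proof.
pose M := max_subtree S.
have yE : m0 f (pt n) \in st_E (m1 f M) by apply: m0_in; rewrite in_setT.
have yL : m0 f (pt n) \notin leaves (m1 f M).
  rewrite m_leaves; apply/imsetP => [[l lL /iso_inj0 E]].
  by move: (leaf_neq_pt lL (in_setT n)); rewrite E eqxx.
by case: (sub_nonleaf yE yL) => n' _ E; exists n'.
Qed.

Definition iso1 n := proj1_sig (constructive_indefinite_description _ (iso_node n)).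

Lemma iso1_pt n : pt (iso1 n) = m0 f (pt n).
Proof. exact: (proj2_sig (constructive_indefinite_description _ (iso_node n))). Qed.

Lemma iso_N A : st_N (m1 f A) = iso1 @: st_N A.
Proof.
apply/setP => n'; rewrite sub_nodeE iso_E m_leaves; apply/andP/imsetP.
  case=> /imsetP [x xE Ex] H.
  have xL : x \notin leaves A by apply: contra H => h; rewrite Ex imset_f.
  case: (sub_nonleaf xE xL) => n nN En; exists n => //.
  by apply: pt_inj; rewrite iso1_pt Ex En.
case=> n nN ->; rewrite iso1_pt; split; first by rewrite imset_f // sub_pt_in.
apply/imsetP => [[l lL /iso_inj0 E]].
by move: (leaf_neq_pt lL nN); rewrite E eqxx.
Qed.

(* Flags are found in the image of the corolla of their node. *)
Lemma iso_flag (x : P2 S) : exists y : P2 T, pp y = iso1 (pp x) /\ ps y = m0 f (ps x).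
Proof.
pose C := corolla (pp x).
have xE : ps x \in st_E C by apply/setU1P; right; apply: imset_f; rewrite inE.
have ne : m0 f (ps x) != st_r (m1 f C).
  by rewrite m_root (inj_eq iso_inj0) no_loop.
case: (sub_flag (m0_in f xE) ne) => y; rewrite iso_N imset_set1 inE => /eqP E1 E2.
by exists y.
Qed.

Definition iso2 x := proj1_sig (constructive_indefinite_description _ (iso_flag x)).

Lemma iso2_spec x : pp (iso2 x) = iso1 (pp x) /\ ps (iso2 x) = m0 f (ps x).
Proof. exact: (proj2_sig (constructive_indefinite_description _ (iso_flag x))). Qed.

Lemma iso_temb : temb (m0 f) iso1 iso2.
Proof.
split=> [x|x||n y E]; [by case: (iso2_spec x) | by case: (iso2_spec x) | exact: iso1_pt |].
have yN : pp y \in st_N (m1 f (corolla n)) by rewrite iso_N imset_set1 inE E.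
have := sub_ps_in yN; rewrite iso_E => /imsetP [z]; case/setU1P => [->|].
  by move=> Ez; move: (no_loop y); rewrite Ez E iso1_pt eqxx.
case/imsetP => x; rewrite inE => /eqP px -> Ez.
exists x; split; first by split=> //; apply: ps_inj; case: (iso2_spec x) => _ ->.
move=> x' [px' Ex']; apply: ps_inj; apply: iso_inj0.
by case: (iso2_spec x') => _ <-; rewrite Ex' Ez.
Qed.

Lemma iso_free : free_mor f.
Proof.
by exists (m0 f), iso1, iso2; split; [exact: iso_temb | split=> // A; rewrite iso_E iso_N].
Qed.

End Isomorphisms.

Lemma iso_free_mor S T (f : tmor S T) : is_iso f -> free_mor f.
Proof. by case=> g [[gf0 fg0] [gf1 _] _]; exact: (iso_free gf0 fg0 gf1). Qed.

(* An isomorphism is surjective on edges and on nodes, so it sends the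
   maximal subtree to the maximal subtree. *)
Lemma iso_boundary_preserving S T (f : tmor S T) : is_iso f -> boundary_preserving f.
Proof.
case=> g [[gf0 fg0] [gf1 _] _] A [hE hN].
split; apply/setP => x; rewrite in_setT.
  by rewrite (iso_E fg0 gf1) hE; apply/imsetP; exists (m0 g x); rewrite ?in_setT ?fg0.
rewrite (iso_N gf0 fg0 gf1) hN; apply/imsetP.
case: (iso_node fg0 x) => n En; exists n; first by rewrite in_setT.
by apply: pt_inj; rewrite iso1_pt En fg0.
Qed.

Lemma boundary_preserving_comp (A B C : tree) (f : tmor A B) (g : tmor B C) (h : tmor A C) :
  boundary_preserving f -> boundary_preserving g -> is_comp f g h -> boundary_preserving h.
Proof. by move=> bf bg [_ c1 _] X HX; rewrite c1; apply/bg/bf. Qed.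

Lemma free_comp (A B C : tree) (f : tmor A B) (g : tmor B C) (h : tmor A C) :
  free_mor f -> free_mor g -> is_comp f g h -> free_mor h.
Proof.
case=> a0 [a1 [a2 [[hs hp ht hu] [Ha0 HaE]]]].
case=> b0 [b1 [b2 [[ks kp kt ku] [Hb0 HbE]]]] [c0 c1 _].
exists (b0 \o a0), (b1 \o a1), (b2 \o a2); split; last split.
- split=> /= [x|x|x|n y E]; rewrite ?ks ?hs ?kp ?hp ?kt ?ht //.
  case: (ku (a1 n) y E) => y' [[py' Ey'] uniq_y'].
  case: (hu n y' py') => x [[px Ex] uniq_x]; exists x; split; first by rewrite Ex.
  move=> x' [px' Ex']; apply: uniq_x; split=> //; apply/esym/uniq_y'; split=> //.
  by rewrite hp px'.
- by move=> x; rewrite c0 Hb0 Ha0.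
- move=> X; rewrite c1 (proj1 (HbE _)) (proj2 (HbE _)) (proj1 (HaE _)) (proj2 (HaE _)).
  by rewrite (imset_comp b0 a0) (imset_comp b1 a1).
Qed.

Lemma lift_in_max_image (B C D : tree) (fm : tmor C D) (v : tmor B D) :
  free_mor fm ->
  (forall A, st_E (m1 v A) \subset st_E (m1 fm (max_subtree C)) /\
             st_N (m1 v A) \subset st_N (m1 fm (max_subtree C))) ->
  exists d : tmor B C, is_comp d fm v.
Proof.
case=> a0 [a1 [a2 [Ha [Hfm0 Hfm1]]]] vsub.
have HvE A e : e \in st_E (m1 v A) -> exists x, a0 x = e.
  by move/(subsetP (proj1 (vsub A))); rewrite (proj1 (Hfm1 _)) => /imsetP [x _ ->]; exists x.
have HvN A n : n \in st_N (m1 v A) -> exists x, a1 x = n.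
  by move/(subsetP (proj2 (vsub A))); rewrite (proj2 (Hfm1 _)) => /imsetP [x _ ->]; exists x.
by exists (lift_mor Ha Hfm0 Hfm1 HvE HvN); exact: lift_mor_comp.
Qed.

Lemma m1_sub_max_image (S T : tree) (phi : tmor S T) (A : subtree S) :
  st_E (m1 phi A) \subset st_E (m1 phi (max_subtree S)) /\
  st_N (m1 phi A) \subset st_N (m1 phi (max_subtree S)).
Proof. by case: (sub_max A) => sE sN; apply: m1_mono. Qed.

(* The diagonal filler of the orthogonality condition: it exists by
   lift_in_max_image and is unique because free morphisms are injective. *)
Lemma unique_lifting (A B C D : tree) (e : tmor A B) (m : tmor C D) (u : tmor A C)
  (v : tmor B D) :
  boundary_preserving e -> free_mor m -> comm_sq u m e v ->
  exists d : tmor B C, is_comp e d u /\ is_comp d m v /\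
    forall d' : tmor B C, is_comp e d' u -> is_comp d' m v -> meq d d'.
Proof.
move=> be Fm [q0 q1 q2].
have emax : m1 e (max_subtree A) = max_subtree B by apply/max_subtreeP/be.
have [d [dc0 dc1 dc2]] : exists d : tmor B C, is_comp d m v.
  apply: lift_in_max_image => // X.
  case: (m1_sub_max_image v X); rewrite -emax -q1 => sE sN.
  case: (m1_sub_max_image m (m1 u (max_subtree A))) => sE' sN'.
  by split; [exact: subset_trans sE sE' | exact: subset_trans sN sN'].
case/free_injective: Fm => i0 i1 i2.
exists d; split; last split=> // [d' _ [dc0' dc1' dc2']].
  by split=> x; [apply: i0 | apply: i1 | apply: i2]; rewrite ?q0 ?q1 ?q2 ?dc0 ?dc1 ?dc2.
by split=> x; [apply: i0 | apply: i1 | apply: i2]; rewrite -?dc0 -?dc1 -?dc2.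
Qed.

(* phi factors through the tree phi_1(max S) followed by its free inclusion;
   the first factor is boundary preserving because the inclusion is
   injective on subtrees. *)
Lemma factorisation (S T : tree) (phi : tmor S T) :
  exists (X : tree) (e : tmor S X) (m : tmor X T),
    boundary_preserving e /\ free_mor m /\ is_comp e m phi.
Proof.
pose K := m1 phi (max_subtree S); pose m := subtree_incl K.
have Fm : free_mor m := free_of_temb_free (subtree_incl_temb K).
have [e ec] : exists e : tmor S (subtree_tree K), is_comp e m phi.
  by apply: lift_in_max_image => // A; rewrite subtree_incl_max; exact: m1_sub_max_image.
exists (subtree_tree K), e, m; split=> // A /max_subtreeP ->.
case/free_injective: Fm => _ i1 _; case: ec => _ ec1 _.
have -> : m1 e (max_subtree S) = max_subtree (subtree_tree K).
  by apply: i1; rewrite -ec1 subtree_incl_max.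
by [].
Qed.

(* Two factorisations of the same morphism are related by a unique
   isomorphism: lift each factorisation against the other. *)
Lemma factorisation_unique : unique_factorisation boundary_preserving free_mor.
Proof.
move=> S T phi X X' e m e' m' Le Rm [c0 c1 c2] Le' Rm' [c0' c1' c2'].
have sq1 : comm_sq e' m' e m by split=> x; rewrite -?c0 -?c1 -?c2 -?c0' -?c1' -?c2'.
have sq2 : comm_sq e m e' m' by split=> x; rewrite -?c0 -?c1 -?c2 -?c0' -?c1' -?c2'.
case: (unique_lifting Le Rm' sq1) => i [ei [im i_uniq]].
case: (unique_lifting Le' Rm sq2) => k [_ [[k0 k1 k2] _]].
exists i; split=> //; exists k; case: im => i0 i1 i2.
case/free_injective: Rm => j0 j1 j2; case/free_injective: Rm' => j0' j1' j2'.
split; split=> x.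
- by apply: j0; rewrite -k0 -i0.
- by apply: j0'; rewrite -i0 -k0.
- by apply: j1; rewrite -k1 -i1.
- by apply: j1'; rewrite -i1 -k1.
- by apply: j2; rewrite -k2 -i2.
- by apply: j2'; rewrite -i2 -k2.
Qed.

Theorem mainTheorem13 :
  OFS boundary_preserving free_mor /\
  unique_factorisation boundary_preserving free_mor.
Proof.
split; last exact: factorisation_unique.
split; first by move=> S T f; exact: iso_boundary_preserving.
split; first by move=> S T f; exact: iso_free_mor.
split; first by move=> A B C f g h; exact: boundary_preserving_comp.
split; first by move=> A B C f g h; exact: free_comp.
split; first exact: factorisation.
by move=> A B C D e m u v; exact: unique_lifting.
Qed.
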